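(* Let $r\ge 3$ and let $\mathcal H=(V,E)$ be an $r$-uniform bi-hypergraph. Suppose $V$ has a partition $V_1,\dots,V_k$ such that each $V_i$ is an independent set of $\mathcal H$, and for each edge $e\in E$ there are indices $i_1,\dots,i_q\in[k]$ with $q<r$ and $e\subseteq V_{i_1}\cup\dots\cup V_{i_q}$. Then $\mathcal H$ is colorable.
   Context: A bi-hypergraph $\mathcal H=(V,E)$ consists of a finite vertex set $V$ and a set $E$ of subsets of $V$, called edges, with no edge contained in another. It is $r$-uniform if every edge has exactly $r$ elements. A set $S\subseteq V$ is independent if no edge of $\mathcal H$ is contained in $S$. A mapping $f:V\to\mathbb N$ is a proper coloring of $\mathcal H$ if $1<|f(e)|<|e|$ for every $e\in E$, where $f(e)=\{f(v):v\in e\}$. $\mathcal H$ is colorable if it has a proper coloring. $[k]=\{1,\dots,k\}$. *)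

From mathcomp Require Import all_boot.
Set Implicit Arguments. Unset Strict Implicit. Unset Printing Implicit Defensive.

Definition bihypergraph (V : finType) (E : {set {set V}}) : Prop :=
  forall e1 e2, e1 \in E -> e2 \in E -> e1 \subset e2 -> e1 = e2.

Definition uniform (V : finType) (r : nat) (E : {set {set V}}) : Prop :=
  forall e, e \in E -> #|e| = r.

Definition independent (V : finType) (E : {set {set V}}) (S : {set V}) : Prop :=
  forall e, e \in E -> ~~ (e \subset S).

Definition color_image (V : finType) (f : V -> nat) (e : {set V}) : seq nat :=
  undup [seq f v | v <- enum e].

Definition proper_coloring (V : finType) (E : {set {set V}}) (f : V -> nat) : Prop :=
  forall e, e \in E -> 1 < size (color_image f e) < #|e|.

Definition colorable (V : finType) (E : {set {set V}}) : Prop :=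
  exists f : V -> nat, proper_coloring E f.

From mathcomp Require Import all_boot.
Set Implicit Arguments. Unset Strict Implicit. Unset Printing Implicit Defensive.

(* Proof idea: colour every vertex by the index of its part, f v = P v.
   - An edge e is not monochromatic: otherwise e lies inside a single part
     V_i, contradicting the independence of V_i (edges are nonempty since
     r >= 3 > 0).
   - An edge e covered by the parts indexed by Q, #|Q| < r = #|e|, sees at
     most #|Q| colours, hence fewer than #|e|. *)

Section ColorImage.

Variables (V : finType) (f : V -> nat).

Lemma color_image_mem (e : {set V}) (v : V) : v \in e -> f v \in color_image f e.
Proof. by move=> ve; rewrite mem_undup; apply: map_f; rewrite mem_enum. Qed.

Lemma color_image_le1_const (e : {set V}) (x : V) :
  x \in e -> size (color_image f e) <= 1 -> {in e, forall y, f y = f x}.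
Proof.
move=> xe small y ye.
have := color_image_mem xe; have := color_image_mem ye.
by case: (color_image f e) small => [|c [|d s]] //= _; rewrite !inE => /eqP -> /eqP ->.
Qed.

(* If all colours used on e belong to a list s, then e sees at most size s
   colours (the colour image has no duplicates). *)
Lemma color_image_size_le (e : {set V}) (s : seq nat) :
  {in e, forall v, f v \in s} -> size (color_image f e) <= size s.
Proof.
move=> fes; apply: uniq_leq_size; first exact: undup_uniq.
by move=> c; rewrite mem_undup => /mapP [v]; rewrite mem_enum => ve ->; apply: fes.
Qed.

End ColorImage.

Section PartColoring.

Variables (V : finType) (k : nat) (P : V -> 'I_k).

Definition part_coloring (v : V) : nat := P v.

(* A nonempty edge sees at least two part colours: a monochromatic edge would
   lie inside a single part, which is independent. *)
Lemma part_coloring_nonmono (E : {set {set V}}) (e : {set V}) :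
  e \in E -> 0 < #|e| -> (forall i : 'I_k, independent E [set v | P v == i]) ->
  1 < size (color_image part_coloring e).
Proof.
move=> eE /card_gt0P [x xe] indep; rewrite ltnNge; apply/negP => small.
have /negP := indep (P x) e eE; apply; apply/subsetP => y ye; rewrite inE.
by apply/eqP/val_inj; apply: (color_image_le1_const xe small).
Qed.

Lemma part_coloring_covered (e : {set V}) (Q : {set 'I_k}) :
  e \subset \bigcup_(i in Q) [set v | P v == i] ->
  size (color_image part_coloring e) <= #|Q|.
Proof.
move=> /subsetP cover; rewrite cardE -(size_map val).
apply: color_image_size_le => v /cover /bigcupP [i iQ]; rewrite inE => /eqP Pv.
by rewrite /part_coloring Pv; apply: map_f; rewrite mem_enum.
Qed.

End PartColoring.

(* The partition V_1,...,V_k is encoded by the part-assignment P : V -> 'I_k,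
   V_i = [set v | P v == i]. *)
Theorem mainTheorem6 (V : finType) (E : {set {set V}}) (r k : nat)
    (P : V -> 'I_k) :
  3 <= r ->
  bihypergraph E ->
  uniform r E ->
  (forall i : 'I_k, independent E [set v | P v == i]) ->
  (forall e, e \in E -> exists Q : {set 'I_k},
       #|Q| < r /\ e \subset \bigcup_(i in Q) [set v | P v == i]) ->
  colorable E.
Proof.
move=> r_ge3 _ unif indep cover; exists (part_coloring P) => e eE.
have [Q [Q_small eQ]] := cover e eE.
have e_nonempty : 0 < #|e| by rewrite (unif e eE) (leq_trans _ r_ge3).
rewrite (unif e eE); apply/andP; split.
  exact: (part_coloring_nonmono eE e_nonempty indep).
exact: leq_ltn_trans (part_coloring_covered eQ) Q_small.
Qed.
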